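(* Let $\pi\colon (X,T)\to (Y,S)$ be a proximal extension between minimal systems, let $\ell\geq 1$, and let $R\subset\mathbb N$ be a set of $\ell$-recurrence for $(Y,S)$. Then $R$ is a set of $\ell$-recurrence for $(X,T)$.
   Context: A system is a compact metric space with a homeomorphism; minimal means no proper nonempty closed invariant subset. A factor map is a continuous surjection intertwining the maps. Points $x,x'$ are proximal if $\inf_{n\in\mathbb N}d(T^nx,T^nx')=0$; $\pi$ is a proximal extension if each fiber $\pi^{-1}(\{y\})$ consists of pairwise proximal points. $R$ is a set of $\ell$-recurrence for a minimal system $(X,T)$ if for every nonempty open $U\subset X$ there is $n\in R$ with $U\cap T^{-n}U\cap\dots\cap T^{-\ell n}U\ne\emptyset$. *)

From Stdlib Require Import Reals List.
Open Scope R_scope.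

Record MetricSpace := {
  carrier :> Type;
  dist : carrier -> carrier -> R;
  dist_nonneg : forall x y, 0 <= dist x y;
  dist_eq0 : forall x y, dist x y = 0 <-> x = y;
  dist_sym : forall x y, dist x y = dist y x;
  dist_tri : forall x y z, dist x z <= dist x y + dist y z
}.

Arguments dist {m} _ _.

Definition is_open {M : MetricSpace} (U : M -> Prop) : Prop :=
  forall x, U x -> exists eps, 0 < eps /\ forall y, dist x y < eps -> U y.

Definition is_closed {M : MetricSpace} (A : M -> Prop) : Prop :=
  is_open (fun x => ~ A x).

Definition compact (M : MetricSpace) : Prop :=
  forall (I : Type) (U : I -> M -> Prop),
    (forall i, is_open (U i)) -> (forall x, exists i, U i x) ->
    exists l : list I, forall x, exists i, In i l /\ U i x.

Definition continuous {M N : MetricSpace} (f : M -> N) : Prop :=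
  forall x eps, 0 < eps -> exists delta, 0 < delta /\
    forall y, dist x y < delta -> dist (f x) (f y) < eps.

Definition homeomorphism {M : MetricSpace} (T : M -> M) : Prop :=
  exists Tinv : M -> M, continuous T /\ continuous Tinv /\
    (forall x, Tinv (T x) = x) /\ (forall x, T (Tinv x) = x).

Definition is_system (M : MetricSpace) (T : M -> M) : Prop :=
  compact M /\ homeomorphism T.

Definition invariant {M : MetricSpace} (T : M -> M) (A : M -> Prop) : Prop :=
  forall y, A y <-> exists x, A x /\ T x = y.

Definition minimal (M : MetricSpace) (T : M -> M) : Prop :=
  is_system M T /\
  forall A : M -> Prop, is_closed A -> invariant T A -> (exists x, A x) ->
    forall x, A x.

Definition factor_map {X Y : MetricSpace} (T : X -> X) (S : Y -> Y) (pi : X -> Y) : Prop :=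
  continuous pi /\ (forall y, exists x, pi x = y) /\ (forall x, pi (T x) = S (pi x)).

Definition proximal {X : MetricSpace} (T : X -> X) (x x' : X) : Prop :=
  forall eps, 0 < eps -> exists n : nat, dist (Nat.iter n T x) (Nat.iter n T x') < eps.

Definition proximal_extension {X Y : MetricSpace} (T : X -> X) (S : Y -> Y) (pi : X -> Y) : Prop :=
  factor_map T S pi /\ forall x x', pi x = pi x' -> proximal T x x'.

Definition set_of_recurrence (l : nat) (Rset : nat -> Prop) (M : MetricSpace) (T : M -> M) : Prop :=
  forall U : M -> Prop, is_open U -> (exists x, U x) ->
    exists n, Rset n /\ exists x, forall j, (j <= l)%nat -> U (Nat.iter (j * n) T x).

(** Fix [x0] in [U] with [B(x0, e) ⊆ U]. The key claim, proved by induction on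
    [k], is that there are [N] and [δ > 0] such that any [k+1] points of [X]
    whose images lie within [δ] of each other are moved by a single [T^m],
    [m <= N], into [B(x0, e)]. For [k = 0] this is the uniform return time of a
    minimal system. For the inductive step, compactness makes proximality
    uniform: points with close images become [η]-close under some [T^m] with
    [m] bounded; the first [k+1] of the moved points are then sent into a
    smaller ball by induction, and the last one follows by equicontinuity of
    the finitely many iterates involved. The claim is applied to
    [x, T^n x, ..., T^(l n) x], where [π x] witnesses [l]-recurrence of the
    [δ/2]-ball around [π x0] in [Y]. *)
From Stdlib Require Import Reals List Lra Lia Classical ClassicalEpsilon.
Open Scope R_scope.

Lemma ball_open {M : MetricSpace} (c : M) (e : R) : is_open (fun y => dist c y < e).
Proof.
  intros x Hx. exists (e - dist c x). split; [lra|].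
  intros y Hy. pose proof (dist_tri M c x y). lra.
Qed.

Lemma dist_refl {M : MetricSpace} (x : M) : dist x x = 0.
Proof. now apply dist_eq0. Qed.

Lemma dist_eq_of_small {M : MetricSpace} (x y : M) :
  (forall e, 0 < e -> dist x y < e) -> x = y.
Proof.
  intros H. apply (dist_eq0 M).
  destruct (Rle_lt_or_eq_dec 0 (dist x y) (dist_nonneg M x y)) as [Hl|Hl].
  - specialize (H _ Hl). lra.
  - now symmetry.
Qed.

Lemma dist_tri4 {M : MetricSpace} (x x' y y' : M) :
  dist x y <= dist x' x + dist x' y' + dist y' y.
Proof.
  pose proof (dist_tri M x x' y). pose proof (dist_tri M x' y' y).
  rewrite (dist_sym M x x') in *. lra.
Qed.

Lemma inv_succ_lt (e : R) : 0 < e -> exists K : nat, forall k, (K <= k)%nat -> / INR (S k) < e.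
Proof.
  intros He. destruct (archimed_cor1 e He) as [K [HK HK0]]. exists K. intros k Hk.
  eapply Rle_lt_trans; [|exact HK]. apply Rinv_le_contravar.
  - now apply lt_0_INR.
  - apply le_INR. lia.
Qed.

Lemma inv_succ_pos (k : nat) : 0 < / INR (S k).
Proof. apply Rinv_0_lt_compat, lt_0_INR. lia. Qed.

Lemma list_max_bound {I : Type} (g : I -> nat) (L : list I) :
  exists N, forall i, In i L -> (g i <= N)%nat.
Proof.
  induction L as [|a L [N HN]].
  - exists 0%nat. intros i [].
  - exists (Nat.max N (g a)). intros i [<-|Hi]; [lia|]. specialize (HN i Hi). lia.
Qed.

Lemma iter_semiconj {A B : Type} (f : A -> A) (g : B -> B) (h : A -> B) :
  (forall x, h (f x) = g (h x)) -> forall m x, h (Nat.iter m f x) = Nat.iter m g (h x).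
Proof. intros H m x. induction m as [|m IH]; simpl; [reflexivity|]. now rewrite H, IH. Qed.

Lemma iter_continuous {M : MetricSpace} (f : M -> M) :
  continuous f -> forall m, continuous (Nat.iter m f).
Proof.
  intros Hf m. induction m as [|m IH]; intros x eps Heps.
  - exists eps. split; [exact Heps|]. now intros y Hy.
  - destruct (Hf (Nat.iter m f x) eps Heps) as [d [Hd Hd']].
    destruct (IH x d Hd) as [d2 [Hd2 Hd2']].
    exists d2. split; [exact Hd2|]. intros y Hy. now apply Hd', Hd2'.
Qed.

Definition cluster_point {M : MetricSpace} (a : nat -> M) (p : M) : Prop :=
  forall eps N, 0 < eps -> exists k, (N <= k)%nat /\ dist (a k) p < eps.

Definition joint_cluster_point {M : MetricSpace} (a b : nat -> M) (p q : M) : Prop :=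
  forall eps N, 0 < eps -> exists k, (N <= k)%nat /\ dist (a k) p < eps /\ dist (b k) q < eps.

Lemma not_cluster_point {M : MetricSpace} (a : nat -> M) (p : M) :
  ~ cluster_point a p ->
  exists eps N, 0 < eps /\ forall k, (N <= k)%nat -> eps <= dist (a k) p.
Proof.
  intros Hp. apply NNPP. intros Hn. apply Hp. intros eps N Heps.
  apply NNPP. intros Hk. apply Hn. exists eps, N. split; [exact Heps|].
  intros k HNk. apply Rnot_lt_le. intros Hd. apply Hk. now exists k.
Qed.

Lemma compact_cluster_point (M : MetricSpace) (a : nat -> M) :
  compact M -> exists p, cluster_point a p.
Proof.
  intros HM. apply NNPP. intros Hn.
  assert (Hfar : forall p, exists eN : R * nat, 0 < fst eN /\
            forall k, (snd eN <= k)%nat -> fst eN <= dist (a k) p).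
  { intros p. destruct (not_cluster_point a p) as [eps [N HN]].
    - intros Hp. apply Hn. now exists p.
    - now exists (eps, N). }
  destruct (choice _ Hfar) as [eN HeN].
  destruct (HM M (fun p y => dist p y < fst (eN p))) as [L HL].
  - intros p. apply ball_open.
  - intros y. exists y. rewrite dist_refl. apply HeN.
  - destruct (list_max_bound (fun p => snd (eN p)) L) as [N HN].
    destruct (HL (a N)) as [p [Hp Hap]].
    destruct (HeN p) as [_ Hfarp]. specialize (Hfarp N (HN p Hp)).
    rewrite dist_sym in Hap. lra.
Qed.

Lemma compact_joint_cluster_point (M : MetricSpace) (a b : nat -> M) :
  compact M -> exists p q, joint_cluster_point a b p q.
Proof.
  intros HM. destruct (compact_cluster_point M a HM) as [p Hp].
  assert (Hsub : forall n, exists k, (n <= k)%nat /\ dist (a k) p < / INR (S n)).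
  { intros n. apply Hp, inv_succ_pos. }
  destruct (choice _ Hsub) as [k Hk].
  destruct (compact_cluster_point M (fun n => b (k n)) HM) as [q Hq].
  exists p, q. intros eps N Heps.
  destruct (inv_succ_lt eps Heps) as [K HK].
  destruct (Hq eps (Nat.max N K) Heps) as [n [Hn Hbq]].
  destruct (Hk n) as [Hnk Hakp]. specialize (HK n ltac:(lia)).
  exists (k n). split; [lia|]. split; [lra|exact Hbq].
Qed.

Lemma joint_cluster_point_map {M M' : MetricSpace} (f : M -> M') (a b : nat -> M) (p q : M) :
  continuous f -> joint_cluster_point a b p q ->
  joint_cluster_point (fun k => f (a k)) (fun k => f (b k)) (f p) (f q).
Proof.
  intros Hf Hpq eps N Heps.
  destruct (Hf p eps Heps) as [dp [Hdp Hfp]].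
  destruct (Hf q eps Heps) as [dq [Hdq Hfq]].
  destruct (Hpq (Rmin dp dq) N) as [k [Hk [Hap Hbq]]]; [now apply Rmin_glb_lt|].
  exists k. split; [exact Hk|].
  rewrite (dist_sym M' (f (a k))), (dist_sym M' (f (b k))).
  rewrite dist_sym in Hap, Hbq. split.
  - apply Hfp. eapply Rlt_le_trans; [exact Hap|apply Rmin_l].
  - apply Hfq. eapply Rlt_le_trans; [exact Hbq|apply Rmin_r].
Qed.

Lemma compact_uniform_continuous {M M' : MetricSpace} (f : M -> M') :
  compact M -> continuous f -> forall eps, 0 < eps ->
  exists eta, 0 < eta /\ forall a b, dist a b < eta -> dist (f a) (f b) < eps.
Proof.
  intros HM Hf eps Heps. apply NNPP. intros Hn.
  assert (Hbad : forall k, exists ab : M * M, dist (fst ab) (snd ab) < / INR (S k) /\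
                   eps <= dist (f (fst ab)) (f (snd ab))).
  { intros k. apply NNPP. intros Hk. apply Hn. exists (/ INR (S k)).
    split; [apply inv_succ_pos|]. intros x y Hxy. apply Rnot_le_lt.
    intros Hf'. apply Hk. now exists (x, y). }
  destruct (choice _ Hbad) as [g Hg].
  destruct (compact_cluster_point M (fun k => fst (g k)) HM) as [p Hp].
  destruct (Hf p (eps/2)) as [d [Hd Hfp]]; [lra|].
  destruct (inv_succ_lt (d/2)) as [K HK]; [lra|].
  destruct (Hp (d/2) K) as [k [Hk Hgp]]; [lra|].
  destruct (Hg k) as [Hclose Hfar]. specialize (HK k Hk).
  pose proof (dist_tri M p (fst (g k)) (snd (g k))).
  rewrite dist_sym in Hgp.
  assert (Hfa : dist (f p) (f (fst (g k))) < eps/2) by (apply Hfp; lra).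
  assert (Hfb : dist (f p) (f (snd (g k))) < eps/2) by (apply Hfp; lra).
  pose proof (dist_tri4 (f (fst (g k))) (f p) (f (snd (g k))) (f (snd (g k)))).
  rewrite dist_refl in *. lra.
Qed.

Lemma compact_uniform_equicontinuous_iter {M : MetricSpace} (f : M -> M) :
  compact M -> continuous f -> forall N eps, 0 < eps ->
  exists eta, 0 < eta /\ forall a b, dist a b < eta ->
    forall m, (m <= N)%nat -> dist (Nat.iter m f a) (Nat.iter m f b) < eps.
Proof.
  intros HM Hf N. induction N as [|N IH]; intros eps Heps.
  - exists eps. split; [exact Heps|]. intros a b Hab m Hm.
    now replace m with 0%nat by lia.
  - destruct (IH eps Heps) as [e1 [He1 H1]].
    destruct (compact_uniform_continuous (Nat.iter (S N) f) HM
                (iter_continuous f Hf (S N)) eps Heps) as [e2 [He2 H2]].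
    exists (Rmin e1 e2). split; [now apply Rmin_glb_lt|].
    intros a b Hab m Hm. destruct (Nat.eq_dec m (S N)) as [->|Hne].
    + apply H2. eapply Rlt_le_trans; [exact Hab|apply Rmin_r].
    + apply H1; [eapply Rlt_le_trans; [exact Hab|apply Rmin_l]|lia].
Qed.

Definition omega_limit {X : MetricSpace} (T : X -> X) (x : X) : X -> Prop :=
  cluster_point (fun n => Nat.iter n T x).

Lemma omega_limit_closed {X : MetricSpace} (T : X -> X) (x : X) :
  is_closed (omega_limit T x).
Proof.
  intros z Hz. destruct (not_cluster_point _ z Hz) as [eps [N [Heps HN]]].
  exists (eps/2). split; [lra|]. intros y Hy Hom.
  destruct (Hom (eps/2) N) as [n [Hn Hdn]]; [lra|].
  specialize (HN n Hn). pose proof (dist_tri X (Nat.iter n T x) y z).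
  rewrite (dist_sym X y z) in *. lra.
Qed.

Lemma omega_limit_invariant {X : MetricSpace} (T : X -> X) (x : X) :
  homeomorphism T -> invariant T (omega_limit T x).
Proof.
  intros [Tinv [HT [HTinv [HTinvT HTTinv]]]] y. split.
  - intros Hy. exists (Tinv y). split; [|apply HTTinv].
    intros eps N Heps. destruct (HTinv y eps Heps) as [d [Hd Hd']].
    destruct (Hy d (S N) Hd) as [[|n] [Hn Hdn]]; [lia|].
    exists n. split; [lia|]. rewrite dist_sym in Hdn |- *.
    specialize (Hd' _ Hdn). simpl in Hd'. now rewrite HTinvT in Hd'.
  - intros [z [Hz <-]] eps N Heps. destruct (HT z eps Heps) as [d [Hd Hd']].
    destruct (Hz d N Hd) as [n [Hn Hdn]]. exists (S n). split; [lia|].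
    rewrite dist_sym in Hdn |- *. now apply Hd'.
Qed.

Section MinimalSystem.

Variables (X : MetricSpace) (T : X -> X).
Hypothesis minX : minimal X T.

Lemma minimal_orbit_dense (x w : X) (e : R) :
  0 < e -> exists n, dist w (Nat.iter n T x) < e.
Proof.
  intros He. destruct minX as [[HX HT] Hmin].
  destruct (compact_cluster_point X (fun n => Nat.iter n T x) HX) as [z Hz].
  destruct (Hmin (omega_limit T x) (omega_limit_closed T x)
              (omega_limit_invariant T x HT) (ex_intro _ z Hz) w e 0%nat He)
    as [n [_ Hn]].
  exists n. now rewrite dist_sym.
Qed.

Lemma minimal_bounded_return (x0 : X) (r : R) :
  0 < r -> exists N, forall p, exists m, (m <= N)%nat /\ dist x0 (Nat.iter m T p) < r.
Proof.
  intros Hr. destruct minX as [[HX [Tinv [HT _]]] _].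
  apply NNPP. intros Hn.
  assert (Hbad : forall N, exists p, forall m, (m <= N)%nat -> r <= dist x0 (Nat.iter m T p)).
  { intros N. apply NNPP. intros HN. apply Hn. exists N. intros p. apply NNPP. intros Hp.
    apply HN. exists p. intros m Hm. apply Rnot_lt_le. intros Hd. apply Hp. now exists m. }
  destruct (choice _ Hbad) as [g Hg].
  destruct (compact_cluster_point X g HX) as [p Hp].
  destruct (minimal_orbit_dense p x0 (r/2)) as [m Hm]; [lra|].
  destruct (iter_continuous T HT m p (r/2)) as [d [Hd Hd']]; [lra|].
  destruct (Hp d m Hd) as [k [Hk Hgk]].
  rewrite dist_sym in Hgk. specialize (Hd' _ Hgk). specialize (Hg k m Hk).
  pose proof (dist_tri X x0 (Nat.iter m T p) (Nat.iter m T (g k))). lra.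
Qed.

End MinimalSystem.

(** Compactness makes fibrewise proximality uniform. *)
Lemma proximal_extension_uniform (X Y : MetricSpace) (T : X -> X) (Sy : Y -> Y) (pi : X -> Y) :
  is_system X T -> proximal_extension T Sy pi ->
  forall eta, 0 < eta -> exists N d, 0 < d /\ forall p q, dist (pi p) (pi q) < d ->
    exists m, (m <= N)%nat /\ dist (Nat.iter m T p) (Nat.iter m T q) < eta.
Proof.
  intros [HX [Tinv [HT _]]] [[Hpi _] Hprox] eta Heta. apply NNPP. intros Hn.
  assert (Hbad : forall k, exists pq : X * X,
            dist (pi (fst pq)) (pi (snd pq)) < / INR (S k) /\
            forall m, (m <= k)%nat -> eta <= dist (Nat.iter m T (fst pq)) (Nat.iter m T (snd pq))).
  { intros k. apply NNPP. intros Hk. apply Hn. exists k, (/ INR (S k)).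
    split; [apply inv_succ_pos|]. intros p q Hpq. apply NNPP. intros Hm. apply Hk.
    exists (p, q). split; [exact Hpq|]. intros m Hmk. apply Rnot_lt_le. intros Hd.
    apply Hm. now exists m. }
  destruct (choice _ Hbad) as [g Hg].
  destruct (compact_joint_cluster_point X (fun k => fst (g k)) (fun k => snd (g k)) HX)
    as [p [q Hpq]].
  assert (Hfibre : pi p = pi q).
  { apply dist_eq_of_small. intros e He.
    destruct (inv_succ_lt (e/3)) as [K HK]; [lra|].
    destruct (joint_cluster_point_map pi _ _ _ _ Hpi Hpq (e/3) K) as [k [Hk [Ha Hb]]]; [lra|].
    destruct (Hg k) as [Hclose _]. specialize (HK k Hk).
    pose proof (dist_tri4 (pi p) (pi (fst (g k))) (pi q) (pi (snd (g k)))). lra. }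
  destruct (Hprox p q Hfibre (eta/3)) as [m Hm]; [lra|].
  destruct (joint_cluster_point_map (Nat.iter m T) _ _ _ _ (iter_continuous T HT m) Hpq
              (eta/3) m) as [k [Hk [Ha Hb]]]; [lra|].
  destruct (Hg k) as [_ Hfar]. specialize (Hfar m Hk).
  pose proof (dist_tri4 (Nat.iter m T (fst (g k))) (Nat.iter m T p)
                        (Nat.iter m T (snd (g k))) (Nat.iter m T q)).
  rewrite dist_sym in Ha, Hb. lra.
Qed.

Section SimultaneousReturn.

Variables (X Y : MetricSpace) (T : X -> X) (Sy : Y -> Y) (pi : X -> Y).
Hypotheses (minX : minimal X T) (sysY : is_system Y Sy) (proxpi : proximal_extension T Sy pi).

Lemma proximal_extension_simultaneous_return (x0 : X) (k : nat) (r : R) :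
  0 < r -> exists N d, 0 < d /\ forall p : nat -> X,
    (forall j, (j <= k)%nat -> dist (pi (p j)) (pi (p 0%nat)) < d) ->
    exists m, (m <= N)%nat /\ forall j, (j <= k)%nat -> dist x0 (Nat.iter m T (p j)) < r.
Proof.
  pose proof minX as [[HX [Tinv [HT _]]] _].
  destruct sysY as [HY [Sinv [HS _]]].
  destruct proxpi as [[_ [_ Hcomm]] _].
  revert r. induction k as [|k IH]; intros r Hr.
  - destruct (minimal_bounded_return X T minX x0 r Hr) as [N HN].
    exists N, 1. split; [lra|]. intros p _.
    destruct (HN (p 0%nat)) as [m [Hm Hd]]. exists m. split; [exact Hm|].
    intros j Hj. now replace j with 0%nat by lia.
  - destruct (IH (r/2)) as [N [d [Hd HN]]]; [lra|].
    destruct (compact_uniform_equicontinuous_iter T HX HT N (r/2)) as [eta [Heta Heta']]; [lra|].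
    destruct (proximal_extension_uniform X Y T Sy pi (proj1 minX) proxpi eta Heta)
      as [N2 [d2 [Hd2 HN2]]].
    destruct (compact_uniform_equicontinuous_iter Sy HY HS N2 d Hd) as [z [Hz Hz']].
    exists (N + N2)%nat, (Rmin z (d2/2)). split; [apply Rmin_glb_lt; lra|].
    intros p Hp.
    assert (Hpz : forall j, (j <= S k)%nat -> dist (pi (p j)) (pi (p 0%nat)) < z).
    { intros j Hj. eapply Rlt_le_trans; [exact (Hp j Hj)|apply Rmin_l]. }
    assert (Hpd2 : forall j, (j <= S k)%nat -> dist (pi (p j)) (pi (p 0%nat)) < d2/2).
    { intros j Hj. eapply Rlt_le_trans; [exact (Hp j Hj)|apply Rmin_r]. }
    (* First make the last two points [η]-close, then apply the induction hypothesis. *)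
    destruct (HN2 (p k) (p (S k))) as [m [Hm Hlast]].
    { pose proof (dist_tri Y (pi (p k)) (pi (p 0%nat)) (pi (p (S k)))).
      rewrite (dist_sym Y (pi (p 0%nat))) in *.
      pose proof (Hpd2 k ltac:(lia)). pose proof (Hpd2 (S k) ltac:(lia)). lra. }
    destruct (HN (fun j => Nat.iter m T (p j))) as [m' [Hm' Hq]].
    { intros j Hj. rewrite !(iter_semiconj T Sy pi Hcomm).
      apply Hz'; [apply Hpz; lia|exact Hm]. }
    exists (m' + m)%nat. split; [lia|]. intros j Hj. rewrite Nat.iter_add.
    destruct (Nat.eq_dec j (S k)) as [->|Hne].
    + pose proof (Hq k ltac:(lia)).
      pose proof (Heta' _ _ Hlast m' Hm').
      pose proof (dist_tri X x0 (Nat.iter m' T (Nat.iter m T (p k)))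
                               (Nat.iter m' T (Nat.iter m T (p (S k))))). lra.
    + pose proof (Hq j ltac:(lia)). lra.
Qed.

End SimultaneousReturn.

Theorem mainTheorem4 (X Y : MetricSpace) (T : X -> X) (S : Y -> Y) (pi : X -> Y)
  (l : nat) (Rset : nat -> Prop) :
  minimal X T -> minimal Y S -> proximal_extension T S pi -> (1 <= l)%nat ->
  set_of_recurrence l Rset Y S -> set_of_recurrence l Rset X T.
Proof.
  intros minX minY proxpi _ recY U HU [x0 Hx0].
  destruct (HU x0 Hx0) as [e [He HUe]].
  pose proof proxpi as [[_ [Hsurj Hcomm]] _].
  destruct (proximal_extension_simultaneous_return X Y T S pi minX (proj1 minY) proxpi x0 l e He)
    as [N [d [Hd HN]]].
  destruct (recY (fun y => dist (pi x0) y < d/2) (ball_open _ _)) as [n [Hn [y Hy]]].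
  { exists (pi x0). rewrite dist_refl. lra. }
  destruct (Hsurj y) as [x Hx].
  destruct (HN (fun j => Nat.iter (j * n) T x)) as [m [_ Hm]].
  { intros j Hj. rewrite !(iter_semiconj T S pi Hcomm), Hx.
    pose proof (dist_tri4 (Nat.iter (j * n) S y) (pi x0) (Nat.iter (0 * n) S y) (pi x0)).
    rewrite dist_refl in *. pose proof (Hy j Hj). pose proof (Hy 0%nat ltac:(lia)). lra. }
  exists n. split; [exact Hn|]. exists (Nat.iter m T x). intros j Hj.
  apply HUe. rewrite <- Nat.iter_add, Nat.add_comm, Nat.iter_add. exact (Hm j Hj).
Qed.
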